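(* Let $k\subset K$ be $\Delta$-fields, let $\Lambda\subset\Delta$ and $\Pi=\Delta\setminus\Lambda$. Assume that $C_k^\Lambda$ is a $\Pi$-differentially closed $\Pi$-field. If $K$ is a $\Delta$-constrained extension of $k$, then $C_K^\Lambda=C_k^\Lambda$.
   Context: All fields have characteristic zero; a $\Delta$-field is a field with a finite set $\Delta$ of commuting derivations. $C_k^\Lambda=\{c\in k:\partial c=0\ \forall\partial\in\Lambda\}$, which is a $\Pi$-field. A $\Pi$-field is $\Pi$-differentially closed if every finite system $P_1=\cdots=P_r=0,\ Q\ne0$ of $\Pi$-differential polynomials over it having a solution in some $\Pi$-extension field has a solution in it (if $\Pi=\emptyset$ this means algebraically closed). For $\eta=(\eta_1,\ldots,\eta_r)\in K^r$, $k\{\eta\}_\Delta$ is the ring generated over $k$ by the $\eta_i$ and all their derivatives. $\eta$ is constrained over $k$ if there exist $P_1,\ldots,P_s,Q\in k\{y_1,\ldots,y_r\}_\Delta$ with $P_j(\eta)=0$, $Q(\eta)\ne0$, such that for every $\Delta$-field $E\supset k$ and every $\zeta\in E^r$ with $P_j(\zeta)=0$ for all $j$ and $Q(\zeta)\ne0$, the map $\eta_i\mapsto\zeta_i$ induces a $k$-isomorphism of $\Delta$-rings $k\{\eta\}_\Delta\to k\{\zeta\}_\Delta$. $K$ is a ($\Delta$-)constrained extension of $k$ if every finite family of elements of $K$ is constrained over $k$. *)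

From HB Require Import structures.
From mathcomp Require Import all_boot all_algebra.
Set Implicit Arguments. Unset Strict Implicit. Unset Printing Implicit Defensive.
Import GRing.Theory.
Local Open Scope ring_scope.

Record dfield (J : Type) := DField {
  dcar :> fieldType;
  dder : J -> dcar -> dcar;
  dder_add : forall j (x y : dcar), dder j (x + y) = dder j x + dder j y;
  dder_mul : forall j (x y : dcar), dder j (x * y) = dder j x * y + x * dder j y;
  dder_comm : forall i j (x : dcar), dder i (dder j x) = dder j (dder i x);
  dchar0 : [pchar dcar] =i pred0 }.
Arguments dder {J} d j x.

(** Differential polynomials in [r] indeterminates y_0..y_(r-1), with
    coefficients from [A] and derivations indexed by [J], presented as
    expressions of the differential ring they generate. *)
Inductive dterm (A J : Type) (r : nat) : Type :=
  | DConst of A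
  | DVar of 'I_r
  | DAdd of dterm A J r & dterm A J r
  | DOpp of dterm A J r
  | DMul of dterm A J r & dterm A J r
  | DDer of J & dterm A J r.

Fixpoint deval (A J : Type) (R : nzRingType) (c : A -> R) (D : J -> R -> R)
    (r : nat) (x : 'I_r -> R) (t : dterm A J r) : R :=
  match t with
  | DConst a => c a
  | DVar i => x i
  | DAdd t1 t2 => deval c D x t1 + deval c D x t2
  | DOpp t1 => - deval c D x t1
  | DMul t1 t2 => deval c D x t1 * deval c D x t2
  | DDer j t1 => D j (deval c D x t1)
  end.

Definition dmorph (J : Type) (k E : dfield J) (f : k -> E) : Prop :=
  [/\ f 1 = 1,
      forall x y, f (x + y) = f x + f y,
      forall x y, f (x * y) = f x * f y
    & forall j x, f (dder k j x) = dder E j (f x)].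

Definition dconst (I : finType) (k : dfield I) (L : {set I}) (x : k) : Prop :=
  forall i, i \in L -> dder k i x = 0.

Definition devalK (I : finType) (k K : dfield I) (iota : k -> K) (r : nat)
    (eta : 'I_r -> K) (P : dterm k I r) : K :=
  deval iota (dder K) eta P.

(** The map eta_i |-> zeta_i induces a k-isomorphism of Delta-rings
    k{eta} -> k{zeta}: the map P(eta) |-> P(zeta) is a well-defined function
    (a Delta-ring k-morphism onto k{zeta} by construction) and is injective
    on k{eta}. *)
Definition induced_iso (I : finType) (k K E : dfield I) (iota : k -> K)
    (psi : k -> E) (r : nat) (eta : 'I_r -> K) (zeta : 'I_r -> E) : Prop :=
  exists f : K -> E,
    (forall P, f (devalK iota eta P) = devalK psi zeta P) /\
    (forall P Q, f (devalK iota eta P) = f (devalK iota eta Q) ->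
                 devalK iota eta P = devalK iota eta Q).

Definition constrained (I : finType) (k K : dfield I) (iota : k -> K)
    (r : nat) (eta : 'I_r -> K) : Prop :=
  exists (s : nat) (Ps : 'I_s -> dterm k I r) (Q : dterm k I r),
    [/\ forall j, devalK iota eta (Ps j) = 0,
        devalK iota eta Q != 0
      & forall (E : dfield I) (psi : k -> E), dmorph psi ->
        forall zeta : 'I_r -> E,
          (forall j, devalK psi zeta (Ps j) = 0) ->
          devalK psi zeta Q != 0 ->
          induced_iso iota psi eta zeta].

Definition constrained_ext (I : finType) (k K : dfield I) (iota : k -> K)
    : Prop :=
  forall (r : nat) (eta : 'I_r -> K), constrained iota eta.

(** Pi-fields have their derivations indexed by the elements of Pi. *)
Definition idx (I : finType) (Pi : {set I}) : Type := {i : I | i \in Pi}.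

Definition sub_dmorph (I : finType) (k : dfield I) (Pi : {set I})
    (S : k -> Prop) (E : dfield (idx Pi)) (psi : {x : k | S x} -> E) : Prop :=
  [/\ forall a, sval a = 1 -> psi a = 1,
      forall a b c, sval c = sval a + sval b -> psi c = psi a + psi b,
      forall a b c, sval c = sval a * sval b -> psi c = psi a * psi b
    & forall (j : idx Pi) a b, sval b = dder k (sval j) (sval a) ->
        psi b = dder E j (psi a)].

Definition diff_closed_sub (I : finType) (k : dfield I) (Pi : {set I})
    (S : k -> Prop) : Prop :=
  forall (n s : nat) (Ps : 'I_s -> dterm {x : k | S x} (idx Pi) n)
         (Q : dterm {x : k | S x} (idx Pi) n),
    (exists (E : dfield (idx Pi)) (psi : {x : k | S x} -> E),
       sub_dmorph psi /\
       exists z : 'I_n -> E,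
         (forall j, deval psi (dder E) z (Ps j) = 0) /\
         deval psi (dder E) z Q != 0) ->
    exists x : 'I_n -> k,
      [/\ forall i, S (x i),
          forall j, deval (fun a => sval a)
                      (fun j : idx Pi => dder k (sval j)) x (Ps j) = 0
        & deval (fun a => sval a) (fun j : idx Pi => dder k (sval j)) x Q != 0].

From HB Require Import structures.
From mathcomp Require Import all_boot all_algebra ring.
From Stdlib Require Import ClassicalEpsilon.
Import GRing.Theory.
Set Implicit Arguments. Unset Strict Implicit. Unset Printing Implicit Defensive.
Local Open Scope ring_scope.

(* Let x in K be a Lambda-constant. Being constrained over k, x is the unique
   zero, up to isomorphism over k, of some system P = 0, Q <> 0 over k. At a
   point whose coordinates are Lambda-constants, every Delta-polynomial over k
   is a k-linear combination of Pi-polynomials over C = C_k^Lambda. Since k and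
   C_K^Lambda are linearly disjoint over C, the system can be traded for a
   system of Pi-polynomials over C that x satisfies and whose constant
   solutions in k also solve P = 0, Q <> 0. As C is Pi-differentially closed,
   such a solution c exists, and the isomorphism k{x} -> k{c} = k over k
   kills x - c, whence x = c. *)

Lemma all_flatten (T : Type) (a : pred T) (ss : seq (seq T)) :
  all a (flatten ss) = all (all a) ss.
Proof. by elim: ss => //= s ss IH; rewrite all_cat IH. Qed.

Lemma in_map_forall (T : Type) (U : eqType) (f : T -> U) (P : U -> Prop) s :
  (forall t, P (f t)) -> {in map f s, forall u, P u}.
Proof.
move=> Pf; elim: s => //= t s IH u; rewrite inE => /orP[/eqP -> //|].
exact: IH.
Qed.

Lemma prop_in_behead (T : eqType) (P : T -> Prop) y s :
  {in y :: s, forall x, P x} -> {in s, forall x, P x}.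
Proof. by move=> Ps x xs; apply: Ps; rewrite inE xs orbT. Qed.

Section Derivations.
Variables (J : Type) (E : dfield J).

Lemma dder_nmod_morphism j : nmod_morphism (dder E j).
Proof.
split; last exact: dder_add.
by apply: (addrI (dder E j 0)); rewrite -dder_add !addr0.
Qed.

HB.instance Definition _ j :=
  GRing.isNmodMorphism.Build E E (dder E j) (dder_nmod_morphism j).

Lemma dder1 j : dder E j 1 = 0.
Proof.
apply: (addrI (dder E j 1)).
by rewrite addr0 -{3}[1]mulr1 dder_mul mulr1 mul1r.
Qed.

Lemma dderV_eq0 j x : dder E j x = 0 -> dder E j x^-1 = 0.
Proof.
move=> dx; have [->|x_neq0] := eqVneq x 0; first by rewrite invr0 raddf0.
have := dder_mul j x x^-1; rewrite mulfV // dder1 dx mul0r add0r => /esym/eqP.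
by rewrite mulf_eq0 (negbTE x_neq0) => /eqP.
Qed.

End Derivations.

Section DMorphism.
Variables (J : Type) (k E : dfield J) (f : k -> E).
Hypothesis f_dmorph : dmorph f.

Lemma dmorph_nmod_morphism : nmod_morphism f.
Proof.
have [_ fD _ _] := f_dmorph; split=> //.
by apply: (addrI (f 0)); rewrite -fD !addr0.
Qed.

Lemma dmorph_monoid_morphism : monoid_morphism f.
Proof. by case: f_dmorph. Qed.

Lemma dmorph_dder j x : f (dder k j x) = dder E j (f x).
Proof. by case: f_dmorph. Qed.

End DMorphism.

Lemma dmorph_id (J : Type) (k : dfield J) : dmorph (@idfun k).
Proof. by []. Qed.

Section Constants.
Variables (I : finType) (Lambda : {set I}) (E : dfield I).
Implicit Types x y : E.

Lemma dconst0 : dconst Lambda (0 : E).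
Proof. by move=> i _; rewrite raddf0. Qed.

Lemma dconst1 : dconst Lambda (1 : E).
Proof. by move=> i _; rewrite dder1. Qed.

Lemma dconstN x : dconst Lambda x -> dconst Lambda (- x).
Proof. by move=> cx i iL; rewrite raddfN /= cx ?oppr0. Qed.

Lemma dconstD x y : dconst Lambda x -> dconst Lambda y -> dconst Lambda (x + y).
Proof. by move=> cx cy i iL; rewrite raddfD /= cx ?cy ?addr0. Qed.

Lemma dconstM x y : dconst Lambda x -> dconst Lambda y -> dconst Lambda (x * y).
Proof. by move=> cx cy i iL; rewrite dder_mul cx ?cy ?mul0r ?mulr0 ?addr0. Qed.

Lemma dconstV x : dconst Lambda x -> dconst Lambda x^-1.
Proof. by move=> cx i iL; rewrite dderV_eq0 ?cx. Qed.

Lemma dconst_dder j x : dconst Lambda x -> dconst Lambda (dder E j x).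
Proof. by move=> cx i iL; rewrite dder_comm cx ?raddf0. Qed.

End Constants.

Lemma dmorph_dconst (I : finType) (Lambda : {set I}) (k E : dfield I) (f : k -> E) :
  dmorph f -> forall a, dconst Lambda a -> dconst Lambda (f a).
Proof.
move=> f_dmorph a ca i iL.
by rewrite -(dmorph_dder f_dmorph) ca ?(dmorph_nmod_morphism f_dmorph).1.
Qed.

Definition comap_dfield (J J' : Type) (h : J' -> J) (E : dfield J) : dfield J' :=
  @DField J' E (fun j => dder E (h j)) (fun j => dder_add (h j))
    (fun j => dder_mul (h j)) (fun i j => dder_comm (h i) (h j)) (dchar0 E).

Lemma sub_dmorph_comap (I : finType) (k K : dfield I) (iota : k -> K) (Pi : {set I})
    (S : k -> Prop) :
  dmorph iota ->
  sub_dmorph (E := comap_dfield (fun j : idx Pi => sval j) K)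
    (fun a : {x | S x} => iota (sval a)).
Proof.
by case=> iota1 iotaD iotaM iota_dder; split=> [a ->|a b c ->|a b c ->|j a b ->].
Qed.

Section ConstantPoints.
Variables (I : finType) (k : dfield I) (Lambda : {set I}).
Local Notation Ck := {x : k | dconst Lambda x}.
Local Notation Pi := (idx (~: Lambda)).

(* Junk value [0] for non-constant [y]; only ever applied to constants. *)
Definition to_const (y : k) : Ck :=
  if excluded_middle_informative (dconst Lambda y) is left cy then exist _ y cy
  else exist _ 0 (@dconst0 _ Lambda k).

Lemma to_constE y : dconst Lambda y -> sval (to_const y) = y.
Proof. by rewrite /to_const; case: excluded_middle_informative. Qed.

Definition pterm n := dterm Ck Pi n.

Definition peval (E : dfield I) (psi : k -> E) n (z : 'I_n -> E) (T : pterm n) : E :=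
  deval (fun a : Ck => psi (sval a)) (fun j : Pi => dder E (sval j)) z T.

Definition combval (E : dfield I) (psi : k -> E) n (z : 'I_n -> E)
    (l : seq (k * pterm n)) : E :=
  \sum_(p <- l) psi p.1 * peval psi z p.2.

(* At a point with Lambda-constant coordinates, a derivation in Lambda only
   hits the coefficients: this writes [t] as a k-combination of Pi-terms. *)
Fixpoint expand n (t : dterm k I n) : seq (k * pterm n) :=
  match t with
  | DConst a => [:: (a, DConst Pi n (to_const 1))]
  | DVar i => [:: (1, DVar Ck Pi i)]
  | DAdd t1 t2 => expand t1 ++ expand t2
  | DOpp t1 => [seq (- p.1, p.2) | p <- expand t1]
  | DMul t1 t2 => [seq (p.1 * q.1, DMul p.2 q.2) | p <- expand t1, q <- expand t2]
  | DDer j t1 => [seq (dder k j p.1, p.2) | p <- expand t1] ++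
      if (insub j : option Pi) is Some j' then [seq (p.1, DDer j' p.2) | p <- expand t1]
      else [::]
  end.

Definition lincomb (L : nzRingType) (e : k -> L) (s : seq k) (vs : seq L) : L :=
  \sum_(p <- zip s vs) e p.1 * p.2.

Definition free_over (A : k -> Prop) (L : nzRingType) (e : k -> L) (vs : seq L) :=
  forall s, size s = size vs -> {in s, forall y, A y} -> lincomb e s vs = 0 ->
  {in s, forall y, y = 0}.

Definition in_span_over (A : k -> Prop) (L : nzRingType) (e : k -> L) (v : L) (vs : seq L) :=
  exists s, [/\ size s = size vs, {in s, forall y, A y} & v = lincomb e s vs].

Local Notation cfree := (free_over (dconst Lambda)).
Local Notation in_cspan := (in_span_over (dconst Lambda)).
Local Notation kfree := (free_over (fun=> True)).

Definition vanish (E : dfield I) (psi : k -> E) n (z : 'I_n -> E) (F : seq (pterm n)) :=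
  all (fun T => peval psi z T == 0) F.

Definition pcomb n (s : seq k) (Ts : seq (pterm n)) : pterm n :=
  foldr (fun p T => DAdd (DMul (DConst Pi n (to_const p.1)) p.2) T)
    (DConst Pi n (to_const 0)) (zip s Ts).

Definition absorb_into_coefs n (a : k) (l : seq (k * pterm n)) (s : seq k) :=
  [seq (p.1.1 + a * p.2, p.1.2) | p <- zip l s].

Definition absorb_into_terms n (T : pterm n) (l : seq (k * pterm n)) (s : seq k) :=
  [seq (p.1.1, DAdd p.1.2 (DMul (DConst Pi n (to_const p.2)) T)) | p <- zip l s].

Lemma unzip2_absorb_into_coefs n a (l : seq (k * pterm n)) s :
  size s = size l -> unzip2 (absorb_into_coefs a l s) = unzip2 l.
Proof. by elim: l s => [|p l IH] [|y s] //= [/IH ->]. Qed.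

Lemma unzip1_absorb_into_terms n T (l : seq (k * pterm n)) s :
  size s = size l -> unzip1 (absorb_into_terms T l s) = unzip1 l.
Proof. by elim: l s => [|p l IH] [|y s] //= [/IH ->]. Qed.

Lemma combval_lincomb (E : dfield I) (psi : k -> E) n z (l : seq (k * pterm n)) :
  combval psi z l = lincomb psi (unzip1 l) [seq peval psi z T | T <- unzip2 l].
Proof.
by rewrite /combval /lincomb; elim: l => [|p l IH]; rewrite /= ?big_nil // !big_cons IH.
Qed.

Lemma combval_id_lincomb n (c : 'I_n -> k) (l : seq (k * pterm n)) :
  combval idfun c l = lincomb idfun [seq peval idfun c T | T <- unzip2 l] (unzip1 l).
Proof.
by rewrite /combval /lincomb; elim: l => [|p l IH]; rewrite /= ?big_nil // !big_cons IH mulrC.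
Qed.

Lemma combval_vanish (E : dfield I) (psi : k -> E) n z (l : seq (k * pterm n)) :
  vanish psi z (unzip2 l) -> combval psi z l = 0.
Proof.
rewrite /combval; elim: l => [|p l IH] /=; first by rewrite big_nil.
by case/andP=> /eqP p0 /IH; rewrite big_cons p0 mulr0 add0r.
Qed.

Section Evaluation.
Variables (E : dfield I) (psi : k -> E).
Hypothesis psi_dmorph : dmorph psi.

HB.instance Definition _ :=
  GRing.isNmodMorphism.Build k E psi (dmorph_nmod_morphism psi_dmorph).
HB.instance Definition _ :=
  GRing.isMonoidMorphism.Build k E psi (dmorph_monoid_morphism psi_dmorph).

Lemma peval_dconst n (z : 'I_n -> E) : (forall i, dconst Lambda (z i)) ->
  forall T : pterm n, dconst Lambda (peval psi z T).
Proof.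
move=> z_const; elim=> [a|i|T1 c1 T2 c2|T c|T1 c1 T2 c2|j T c] /=.
- exact: dmorph_dconst psi_dmorph _ (proj2_sig a).
- exact: z_const.
- exact: dconstD.
- exact: dconstN.
- exact: dconstM.
- exact: dconst_dder.
Qed.

Lemma expandE n (z : 'I_n -> E) : (forall i, dconst Lambda (z i)) ->
  forall t, deval psi (dder E) z t = combval psi z (expand t).
Proof.
move=> z_const; rewrite /combval.
elim=> [a|i|t1 IH1 t2 IH2|t IH|t1 IH1 t2 IH2|j t IH] /=.
- by rewrite big_seq1 /peval /= to_constE ?rmorph1 ?mulr1 //; apply: dconst1.
- by rewrite big_cons big_nil rmorph1 mul1r addr0.
- by rewrite big_cat IH1 IH2.
- by rewrite big_map IH -sumrN; apply: eq_bigr => p _; rewrite rmorphN mulNr.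
- rewrite big_allpairs_dep IH1 IH2 mulr_suml; apply: eq_bigr => p _.
  by rewrite mulr_sumr; apply: eq_bigr => q _; rewrite (rmorphM psi) mulrACA.
- rewrite IH raddf_sum big_cat big_map /=.
  under eq_bigr do rewrite dder_mul -(dmorph_dder psi_dmorph).
  rewrite big_split /=; congr (_ + _).
  case: insubP => [j' _ j'E|]; first by rewrite big_map; apply: eq_bigr => p _; rewrite -j'E.
  rewrite in_setC negbK big_nil => jL.
  by rewrite big1 // => p _; rewrite (peval_dconst z_const) ?mulr0.
Qed.

Lemma lincomb_scale c s vs :
  lincomb psi [seq c * y | y <- s] vs = psi c * lincomb psi s vs.
Proof.
rewrite /lincomb; elim: s vs => [|y s IH] [|v vs] /=; rewrite ?big_nil ?mulr0 //.
by rewrite !big_cons IH (rmorphM psi) mulrDr mulrA.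
Qed.

Lemma lincomb_coef0 s vs : {in s, forall y, y = 0} -> lincomb psi s vs = 0.
Proof.
rewrite /lincomb; elim: s vs => [|y s IH] [|v vs] s0 /=; rewrite ?big_nil // big_cons.
rewrite (s0 y (mem_head y s)) (rmorph0 psi) mul0r add0r.
exact/IH/(prop_in_behead s0).
Qed.

Lemma lincomb_dder j s vs : j \in Lambda -> {in vs, forall v, dconst Lambda v} ->
  dder E j (lincomb psi s vs) = lincomb psi [seq dder k j y | y <- s] vs.
Proof.
move=> jL; rewrite /lincomb; elim: s vs => [|y s IH] [|v vs] vs_const /=;
  rewrite ?big_nil ?raddf0 //.
rewrite !big_cons raddfD /= dder_mul IH; last exact: prop_in_behead vs_const.
by rewrite (vs_const v (mem_head v vs) j jL) mulr0 addr0 (dmorph_dder psi_dmorph).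
Qed.

Lemma free_over_behead (A : k -> Prop) v vs :
  A 0 -> free_over A psi (v :: vs) -> free_over A psi vs.
Proof.
move=> A0 vvs_free s size_s s_A rel y ys.
apply: (vvs_free (0 :: s)); rewrite /= ?size_s ?inE ?ys ?orbT //.
  by move=> x; rewrite inE => /predU1P[->|/s_A].
by rewrite /lincomb /= big_cons (rmorph0 psi) mul0r add0r.
Qed.

Lemma cfree_cons v vs : cfree psi vs -> ~ in_cspan psi v vs -> cfree psi (v :: vs).
Proof.
move=> vs_free v_new [|s0 s] //= [size_s] s_const.
have s0_const := s_const s0 (mem_head s0 s); have {}s_const := prop_in_behead s_const.
rewrite /lincomb /= big_cons -/(lincomb psi s vs).
have [-> rel | s0_neq0] := eqVneq s0 0.
  move: rel; rewrite (rmorph0 psi) mul0r add0r => rel y.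
  by rewrite inE => /predU1P[//|]; apply: vs_free.
move/eqP; rewrite addrC addr_eq0 => /eqP rel; case: v_new.
exists [seq - s0^-1 * y | y <- s]; split; first by rewrite size_map.
  by move=> _ /mapP[y ys ->]; apply/dconstM/s_const/ys/dconstN/dconstV.
rewrite lincomb_scale rel (rmorphN psi) (fmorphV psi) mulNr mulrN opprK mulrA.
by rewrite mulVf ?mul1r // fmorph_eq0.
Qed.

(* Linear disjointness of k and C_E^Lambda over C_k^Lambda: once a relation
   is scaled to have first coefficient 1, the derivations in Lambda kill that
   coefficient, so by induction all its coefficients are constants. *)
Lemma cfree_kfree ws : {in ws, forall w, dconst Lambda w} -> cfree psi ws -> kfree psi ws.
Proof.
elim: ws => [|w ws IH] ws_const ws_free [|a0 a] //= [size_a] _.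
have {}IH := IH (prop_in_behead ws_const) (free_over_behead (@dconst0 _ Lambda k) ws_free).
rewrite /lincomb /= big_cons -/(lincomb psi a ws).
have [-> rel | a0_neq0 rel] := eqVneq a0 0.
  move: rel; rewrite (rmorph0 psi) mul0r add0r => rel y.
  by rewrite inE => /predU1P[//|]; apply: IH.
pose b := [seq a0^-1 * y | y <- a].
have rel1 : lincomb psi (1 :: b) (w :: ws) = 0.
  by rewrite -(mulVf a0_neq0) (lincomb_scale a0^-1 (a0 :: a)) /lincomb /= big_cons rel mulr0.
have b_const : {in b, forall y, dconst Lambda y}.
  move=> y yb i iL; have := congr1 (dder E i) rel1.
  rewrite raddf0 lincomb_dder // /lincomb /= big_cons dder1 (rmorph0 psi) mul0r add0r.
  rewrite -/(lincomb psi _ ws) => rel_b.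
  by apply: (IH _ _ _ rel_b _ (map_f _ yb)); rewrite ?size_map.
have b1_const : {in 1 :: b, forall y, dconst Lambda y}.
  by move=> y; rewrite inE => /predU1P[->|/b_const //]; apply: dconst1.
have size_b1 : size (1 :: b) = size (w :: ws) by rewrite /= size_map size_a.
by have /eqP := ws_free _ size_b1 b1_const rel1 1 (mem_head 1 b); rewrite oner_eq0.
Qed.

Lemma peval_pcomb n (z : 'I_n -> E) s Ts : {in s, forall y, dconst Lambda y} ->
  peval psi z (pcomb s Ts) = lincomb psi s [seq peval psi z T | T <- Ts].
Proof.
rewrite /lincomb; elim: s Ts => [|y s IH] [|T Ts] s_const; rewrite ?big_nil ?big_cons;
  try by rewrite /peval /= to_constE ?rmorph0 //; apply: dconst0.
rewrite -IH; last exact: prop_in_behead s_const.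
by rewrite /peval /= to_constE //; apply/s_const/mem_head.
Qed.

Lemma combval_absorb_into_coefs n (z : 'I_n -> E) a l s : size s = size l ->
  combval psi z (absorb_into_coefs a l s) =
  combval psi z l + psi a * lincomb psi s [seq peval psi z T | T <- unzip2 l].
Proof.
rewrite /combval /lincomb; elim: l s => [|p l IH] [|y s] //=.
  by rewrite !big_nil mulr0 addr0.
by case=> /IH; rewrite !big_cons => -> /=; rewrite (rmorphD psi) (rmorphM psi); ring.
Qed.

Lemma combval_absorb_into_terms n (z : 'I_n -> E) T l s :
  {in s, forall y, dconst Lambda y} -> size s = size l ->
  combval psi z (absorb_into_terms T l s) =
  combval psi z l + psi (lincomb idfun s (unzip1 l)) * peval psi z T.
Proof.
rewrite /combval /lincomb; elim: l s => [|p l IH] [|y s] //= s_const.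
  by rewrite !big_nil rmorph0 mul0r addr0.
case=> /IH; rewrite !big_cons => ->; last exact: prop_in_behead s_const.
rewrite /peval /= to_constE ?(rmorphD psi) ?(rmorphM psi); first ring.
exact/s_const/mem_head.
Qed.

End Evaluation.

Lemma vanish_nthP n d (E : dfield I) (psi : k -> E) (z : 'I_n -> E) F :
  vanish psi z F <-> forall i : 'I_(size F), peval psi z (nth d F i) = 0.
Proof.
split=> [/(all_nthP d) F0 i|F0]; first exact/eqP/F0.
by apply/(all_nthP d) => i i_lt; apply/eqP/(F0 (Ordinal i_lt)).
Qed.

Lemma coef_normal_form n (l : seq (k * pterm n)) :
  exists l', cfree idfun (unzip1 l') /\
    forall (E : dfield I) (psi : k -> E) z, dmorph psi -> combval psi z l' = combval psi z l.
Proof.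
elim: l => [|[a T] l [l' [l'_free l'_eq]]]; first by exists [::]; split=> // -[].
case: (excluded_middle_informative (in_cspan idfun a (unzip1 l'))).
  case=> s [size_s s_const a_eq]; have size_s' : size s = size l' by rewrite size_s size_map.
  exists (absorb_into_terms T l' s); split; first by rewrite unzip1_absorb_into_terms.
  move=> E psi z psi_dmorph; rewrite combval_absorb_into_terms // l'_eq // -a_eq.
  by rewrite /combval big_cons addrC.
move=> a_new; exists ((a, T) :: l'); split.
  exact (cfree_cons (dmorph_id k) l'_free a_new).
by move=> E psi z psi_dmorph; rewrite /combval !big_cons -!/(combval _ _ _) l'_eq.
Qed.

(* Greedy extraction of a C_k^Lambda-basis of the values at x; each term
   whose value is C_k^Lambda-dependent on the kept ones becomes a relation. *)
Lemma value_normal_form (K : dfield I) (iota : k -> K) n (x : 'I_n -> K)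
    (l : seq (k * pterm n)) :
  dmorph iota ->
  exists F l', [/\ vanish iota x F, cfree iota [seq peval iota x T | T <- unzip2 l'] &
    forall (E : dfield I) (psi : k -> E) z, dmorph psi -> vanish psi z F ->
      combval psi z l' = combval psi z l].
Proof.
move=> iota_dmorph.
elim: l => [|[a T] l [F [l' [Fx l'_free l'_eq]]]]; first by exists [::], [::]; split=> // -[].
case: (excluded_middle_informative
  (in_cspan iota (peval iota x T) [seq peval iota x U | U <- unzip2 l'])); last first.
  move=> T_new; exists F, ((a, T) :: l'); split=> //; first exact: cfree_cons.
  by move=> E psi z psi_dmorph Fz; rewrite /combval !big_cons -!/(combval _ _ _) l'_eq.
case=> s [size_s s_const T_eq]; have size_s' : size s = size l' by rewrite size_s !size_map.
pose R := DAdd T (DOpp (pcomb s (unzip2 l'))).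
have peval_R (E : dfield I) (psi : k -> E) z : dmorph psi ->
    peval psi z R = peval psi z T - lincomb psi s [seq peval psi z U | U <- unzip2 l'].
  by move=> psi_dmorph; rewrite -peval_pcomb.
exists (R :: F), (absorb_into_coefs a l' s); split.
- by apply/andP; split=> //; rewrite peval_R // T_eq subrr.
- by rewrite unzip2_absorb_into_coefs.
- move=> E psi z psi_dmorph /andP[/eqP R0 Fz].
  rewrite combval_absorb_into_coefs // l'_eq // /combval big_cons addrC.
  by move/eqP: R0; rewrite peval_R // subr_eq0 => /eqP ->.
Qed.

Lemma vanishing_relations (K : dfield I) (iota : k -> K) n (x : 'I_n -> K)
    (P : dterm k I n) :
  dmorph iota -> (forall i, dconst Lambda (x i)) -> devalK iota x P = 0 ->
  exists F, vanish iota x F /\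
    forall (E : dfield I) (psi : k -> E) z, dmorph psi -> (forall i, dconst Lambda (z i)) ->
      vanish psi z F -> devalK psi z P = 0.
Proof.
move=> iota_dmorph x_const Px.
have [F [l' [Fx l'_free l'_eq]]] := value_normal_form x (expand P) iota_dmorph.
have l'_coef0 : {in unzip1 l', forall a, a = 0}.
  apply: (cfree_kfree iota_dmorph _ l'_free); rewrite ?size_map //.
    exact: in_map_forall (peval_dconst iota_dmorph x_const).
  by rewrite -combval_lincomb l'_eq // -expandE.
exists F; split=> // E psi z psi_dmorph z_const Fz.
by rewrite /devalK (expandE psi_dmorph z_const) -l'_eq // combval_lincomb lincomb_coef0.
Qed.

Lemma nonvanishing_relation (K : dfield I) (iota : k -> K) n (x : 'I_n -> K)
    (Q : dterm k I n) :
  dmorph iota -> (forall i, dconst Lambda (x i)) -> devalK iota x Q != 0 ->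
  exists G : pterm n, peval iota x G != 0 /\
    forall c : 'I_n -> k, (forall i, dconst Lambda (c i)) ->
      peval idfun c G != 0 -> devalK idfun c Q != 0.
Proof.
move=> iota_dmorph x_const Qx.
have [l' [l'_free l'_eq]] := coef_normal_form (expand Q).
have : ~~ vanish iota x (unzip2 l').
  apply: contraNN Qx => l'x0; apply/eqP.
  by rewrite /devalK (expandE iota_dmorph x_const) -l'_eq // combval_vanish.
pose d := DConst Pi n (to_const 0).
rewrite /vanish -has_predC => /(has_nthP d)[i i_lt Gx].
exists (nth d (unzip2 l') i); split=> // c c_const; apply: contraNN => /eqP Qc; apply/eqP.
have Gc_in : peval idfun c (nth d (unzip2 l') i) \in [seq peval idfun c T | T <- unzip2 l'].
  by rewrite -(nth_map d 0) //; apply: mem_nth; rewrite size_map.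
apply: (l'_free _ _ _ _ _ Gc_in); rewrite ?size_map //.
  exact: in_map_forall (peval_dconst (dmorph_id k) c_const).
by rewrite -combval_id_lincomb l'_eq ?dmorph_id // -expandE ?dmorph_id.
Qed.

Lemma constant_solution (K : dfield I) (iota : k -> K) n (x : 'I_n -> K) s
    (Ps : 'I_s -> dterm k I n) (Q : dterm k I n) :
  dmorph iota -> diff_closed_sub (~: Lambda) (@dconst I k Lambda) ->
  (forall i, dconst Lambda (x i)) -> (forall j, devalK iota x (Ps j) = 0) ->
  devalK iota x Q != 0 ->
  exists c : 'I_n -> k, [/\ forall i, dconst Lambda (c i),
    forall j, devalK idfun c (Ps j) = 0 & devalK idfun c Q != 0].
Proof.
move=> iota_dmorph closed x_const Px Qx.
have [Fs Fs_spec] := @choice _ _ _ (fun j => vanishing_relations iota_dmorph x_const (Px j)).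
pose F := flatten [seq Fs j | j <- enum 'I_s].
have vanishF (E : dfield I) (psi : k -> E) z :
    vanish psi z F = all (fun j => vanish psi z (Fs j)) (enum 'I_s).
  by rewrite /vanish all_flatten all_map.
have [G [Gx G_spec]] := nonvanishing_relation iota_dmorph x_const Qx.
pose d := DConst Pi n (to_const 0).
have [|c [c_const Fc Gc]] := closed n (size F) (nth d F) G.
  exists (comap_dfield (fun j : Pi => sval j) K), (fun a => iota (sval a)).
  split; first exact: sub_dmorph_comap.
  exists x; split; last exact: Gx.
  apply/(vanish_nthP d).
  by rewrite vanishF; apply/allP => j _; case: (Fs_spec j).
have : vanish idfun c F by apply/(vanish_nthP d).
rewrite vanishF => /allP Fsc.
exists c; split=> // [j|]; last exact: G_spec.
by apply: (Fs_spec j).2 (dmorph_id k) c_const (Fsc j (mem_enum _ j)).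
Qed.

End ConstantPoints.

Lemma induced_iso_idE (I : finType) (k K : dfield I) (iota : k -> K) r (eta : 'I_r -> K)
    (c : 'I_r -> k) :
  dmorph iota -> induced_iso iota idfun eta c -> forall i, eta i = iota (c i).
Proof.
move=> iota_dmorph [f [f_eval f_inj]] i.
have := f_inj (DAdd (DVar k I i) (DOpp (DConst I r (c i)))) (DConst I r 0).
rewrite !f_eval /devalK /= subrr (dmorph_nmod_morphism iota_dmorph).1 => /(_ erefl) /eqP.
by rewrite subr_eq0 => /eqP.
Qed.

Theorem lemma9p3 (I : finType) (k K : dfield I) (iota : k -> K)
    (Lambda : {set I}) :
  dmorph iota ->
  diff_closed_sub (~: Lambda) (@dconst I k Lambda) ->
  constrained_ext iota ->
  forall x : K, dconst Lambda x <-> exists c : k, dconst Lambda c /\ iota c = x.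
Proof.
move=> iota_dmorph closed constrained x; split=> [x_const|[c [c_const <-]]].
  have [s [Ps [Q [Px Qx iso]]]] := constrained 1%N (fun=> x).
  have [c [c_const Pc Qc]] := constant_solution iota_dmorph closed (fun=> x_const) Px Qx.
  exists (c ord0); split=> //.
  by rewrite -(induced_iso_idE iota_dmorph (iso k idfun (dmorph_id k) c Pc Qc)).
exact: dmorph_dconst.
Qed.
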